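(* Let $\mathbb K$ be a field with $\operatorname{char}(\mathbb K)=0$, let $n\ge2$, and let $\mathcal G_n$, $\mathcal N_{0,n}$ and $U_m(z_g)$ be as in the context. Suppose $f\in A_{\mathbb K}(\mathcal G_n)$ has the form $$f=\sum_{g\in\mathcal N_{0,n}}c_g1_{U_m(z_g)}\qquad\text{for some }c_g\in\mathbb K\text{ and }m\in\mathbb N.$$ Then $f$ belongs to the ideal $S_{\mathbb K}(\mathcal G_n)$ of singular functions if and only if $f$ is the zero function.
   Context: Let $X=\{\mathbf 0,\mathbf 1\}$, $X^*$ the finite words (with empty word $\varnothing$), $X^\omega$ the infinite words, $C(\eta)=\{\eta w:w\in X^\omega\}$, $\mathbf 1^m$ and $\mathbf 1^\infty$ the finite/infinite words of ones. Fix $n\ge2$, a primitive polynomial $f_n$ of degree $n$ over $\mathbb F_2$ with root $\alpha$, and $\operatorname{Tr}(\beta)=\beta+\beta^2+\dots+\beta^{2^{n-1}}\in\mathbb F_2$. $\mathfrak G_n$ is the group of automorphisms of the binary rooted tree $X^*$ generated by $a$ ($a\cdot(\mathbf 0w)=\mathbf 1w$, $a\cdot(\mathbf 1w)=\mathbf 0w$) and $\iota_n(\beta)$, $\beta\in\mathbb F_{2^n}$, where $\iota_n(\beta)\cdot(\mathbf 0w)=\mathbf 0(a^{\operatorname{Tr}(\beta)}\cdot w)$, $\iota_n(\beta)\cdot(\mathbf 1w)=\mathbf 1(\iota_n(\alpha\beta)\cdot w)$; restrictions $g|_x$ are given by $g\cdot(xw)=(g\cdot x)(g|_x\cdot w)$.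 $\mathcal N_{0,n}=\iota_n(\mathbb F_{2^n})$, $e=\iota_n(0)$. $\mathcal G_n$ is the groupoid of germs of the action of the inverse semigroup $\{(\eta,g,\mu)\}\cup\{0\}$ on $X^\omega$ with $(\eta,g,\mu):C(\mu)\to C(\eta)$, $\mu w\mapsto\eta(g\cdot w)$; germs $[(\eta,g,\mu),w]$, $w\in C(\mu)$, with $[(\eta,g,\mu),w]=[(\eta',g',\mu'),w']$ iff $w=w'$ and some finite prefix $\nu=\mu\epsilon=\mu'\epsilon'$ of $w$ satisfies $\eta(g\cdot\epsilon)=\eta'(g'\cdot\epsilon')$ and $g|_\epsilon=g'|_{\epsilon'}$; basic open bisections $\Theta(s,U)=\{[s,w]:w\in U\}$. It is a second countable ample groupoid with Hausdorff unit space $X^\omega$. For $g\in\mathfrak G_n$, $z_g=[(\varnothing,g,\varnothing),\mathbf 1^\infty]$ and $U_m(z_g)=\Theta((\varnothing,g,\varnothing),C(\mathbf 1^m))$. $A_{\mathbb K}(\mathcal G_n)$ is the Steinberg algebra: the $\mathbb K$-span of characteristic functions of compact open bisections, with convolution. A function $f\in A_{\mathbb K}(\mathcal G_n)$ is singular if $f=\sum_{i=1}^N c_i1_{S_i}$ where each $S_i$ is a relatively closed subset of some open bisection and has empty interior; equivalently, $\operatorname{supp}(f)=\{x:f(x)\neq0\}$ has empty interior. The singular functions form an ideal $S_{\mathbb K}(\mathcal G_n)$. *)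

From HB Require Import structures.
From mathcomp Require Import all_boot all_order all_algebra all_field.
From mathcomp Require Import boolp.
Set Implicit Arguments. Unset Strict Implicit. Unset Printing Implicit Defensive.
Import GRing.Theory.
Local Open Scope ring_scope.

(* Finite words over X = {0,1}: 0 = false, 1 = true.  Infinite words: nat -> bool. *)

Section Defs.
Variables (F : finFieldType) (n : nat) (alpha : F).

Definition Tr (beta : F) : F := \sum_(i < n) beta ^+ (2 ^ i)%N.

Definition act_a (w : seq bool) : seq bool :=
  match w with [::] => [::] | x :: w' => ~~ x :: w' end.

Fixpoint act_iota (beta : F) (w : seq bool) : seq bool :=
  match w with
  | [::] => [::]
  | false :: w' => false :: (if Tr beta == 1 then act_a w' else w')
  | true :: w' => true :: act_iota (alpha * beta) w'
  end.

(* generators of G_n: None = a, Some beta = iota_n(beta).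
   All generators are involutions, so G_n consists of the finite products
   of generators; an element is represented by a word of generators,
   [:: s1; ...; sk] acting as s1 (s2 (... (sk w))). *)
Definition gen := option F.
Definition act_gen (s : gen) (w : seq bool) : seq bool :=
  match s with None => act_a w | Some beta => act_iota beta w end.
Definition gword := seq gen.
Definition act (g : gword) (w : seq bool) : seq bool := foldr act_gen w g.

Definition restr (g : gword) (eps : seq bool) (u : seq bool) : seq bool :=
  drop (size eps) (act g (eps ++ u)).

Definition in_cyl (mu : seq bool) (w : nat -> bool) : Prop :=
  forall i, (i < size mu)%N -> w i = nth false mu i.

Definition pre (w : nat -> bool) (k : nat) : seq bool := mkseq w k.

(* representatives ((eta, g, mu), w) of germs [(eta,g,mu), w] *)
Definition grep := (seq bool * gword * seq bool * (nat -> bool))%type.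
Definition valid (x : grep) : Prop := let: (_, _, mu, w) := x in in_cyl mu w.

Definition germ_eq (x y : grep) : Prop :=
  let: (eta, g, mu, w) := x in
  let: (eta', g', mu', w') := y in
  (forall i, w i = w' i) /\
  exists k, [/\ (size mu <= k)%N, (size mu' <= k)%N,
    eta ++ act g (drop (size mu) (pre w k))
      = eta' ++ act g' (drop (size mu') (pre w k))
    & forall u, restr g (drop (size mu) (pre w k)) u
                = restr g' (drop (size mu') (pre w k)) u].

Definition gset := grep -> Prop.

Definition cantor_open (U : (nat -> bool) -> Prop) : Prop :=
  forall w, U w -> exists k, forall w', (forall i, (i < k)%N -> w' i = w i) -> U w'.

Definition Theta (eta : seq bool) (g : gword) (mu : seq bool)
  (U : (nat -> bool) -> Prop) : gset :=
  fun x => exists w, [/\ U w, in_cyl mu w & germ_eq x (eta, g, mu, w)].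

(* open subsets of the groupoid: sets of germs (invariant under germ equality)
   which are unions of basic open bisections Theta(s, U), U open in C(mu) *)
Definition gopen (A : gset) : Prop :=
  (forall x y, valid x -> valid y -> germ_eq x y -> A x -> A y) /\
  forall x, valid x -> A x ->
    exists eta g mu U, [/\ cantor_open U, (forall w, U w -> in_cyl mu w),
      Theta eta g mu U x & forall y, valid y -> Theta eta g mu U y -> A y].

Definition support (K : fieldType) (f : grep -> K) : gset :=
  fun x => valid x /\ f x != 0.

(* singular: supp(f) has empty interior, i.e. every open set of germs
   contained in supp(f) is empty *)
Definition singular (K : fieldType) (f : grep -> K) : Prop :=
  forall A, gopen A -> (forall x, valid x -> A x -> support f x) ->
    forall x, valid x -> ~ A x.

(* U_m(z_g) = Theta((empty, g, empty), C(1^m)) for g = iota_n(beta) *)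
Definition ones_cyl (m : nat) : (nat -> bool) -> Prop :=
  fun w => forall i, (i < m)%N -> w i = true.
Definition U_iota (m : nat) (beta : F) : gset :=
  Theta [::] [:: Some beta] [::] (ones_cyl m).

(* f = sum_{g in N_{0,n}} c_g 1_{U_m(z_g)}, indexed by beta (iota_n is injective) *)
Definition fsum (K : fieldType) (c : F -> K) (m : nat) (x : grep) : K :=
  \sum_(beta : F) c beta * (if `[< U_iota m beta x >] then 1 else 0).

End Defs.

(* Fix k >= m and beta0.  On the cylinder C(1^k 0), iota_n(beta) acts as
   1^k 0 w |-> 1^k 0 (a^Tr(alpha^k beta) w), so the germs of iota_n(beta0) at
   points of C(1^k 0) form a nonempty open set on which f is constant, equal to
   the sum of the c_beta with Tr(alpha^k beta) = Tr(alpha^k beta0).  A singular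
   function vanishes on every nonempty open set on which it is constant, so all
   these class sums vanish.  Since alpha^k runs through every g != 0, c sums to
   zero on every coset {x | Tr(g (x - b)) = 0}; summing over g, and using that
   the trace is not identically zero and that char K = 0, forces c = 0. *)

From HB Require Import structures.
From mathcomp Require Import all_boot all_order all_algebra all_field.
From mathcomp Require Import boolp.
Set Implicit Arguments. Unset Strict Implicit. Unset Printing Implicit Defensive.
Import GRing.Theory.
Local Open Scope ring_scope.

Lemma drop_cat_leq (T : Type) k (s1 s2 : seq T) :
  (k <= size s1)%N -> drop k (s1 ++ s2) = drop k s1 ++ s2.
Proof.
rewrite drop_cat leq_eqVlt => /orP[/eqP->|-> //].
by rewrite ltnn subnn drop0 drop_size.
Qed.

Lemma size_pre w k : size (pre w k) = k.
Proof. exact: size_mkseq. Qed.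

Lemma pre_add w k j : pre w (k + j) = pre w k ++ mkseq (fun i => w (k + i)) j.
Proof.
by rewrite /pre /mkseq iotaD map_cat add0n -[in iota k j](addn0 k) iotaDl -map_comp.
Qed.

Lemma in_cylP mu w : in_cyl mu w <-> pre w (size mu) = mu.
Proof.
split=> [w_mu | pre_mu i i_lt]; last by rewrite -pre_mu nth_mkseq.
apply: (@eq_from_nth _ false) => [|i]; rewrite size_pre // => i_lt.
by rewrite nth_mkseq // w_mu.
Qed.

Lemma cantor_open_cyl mu : cantor_open (in_cyl mu).
Proof. by move=> w w_mu; exists (size mu) => w' w'_w i i_lt; rewrite w'_w // w_mu. Qed.

Section Words.
Variables (F : finFieldType) (n : nat) (alpha : F).
Local Notation act_iota := (act_iota n alpha).
Local Notation act := (act n alpha).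
Local Notation restr := (restr n alpha).

Lemma size_act_a w : size (act_a w) = size w.
Proof. by case: w. Qed.

Lemma size_act_iota b w : size (act_iota b w) = size w.
Proof.
elim: w b => [|[] w IH] b //=; first by rewrite IH.
by case: ifP; rewrite ?size_act_a.
Qed.

Lemma size_act g w : size (act g w) = size w.
Proof. by elim: g => [|[b|] g IH] //=; rewrite ?size_act_iota ?size_act_a IH. Qed.

Lemma act_a_cat p r : exists r', act_a (p ++ r) = act_a p ++ r'.
Proof. by case: p => [|x p]; [exists (act_a r) | exists r]. Qed.

Lemma act_iota_cat b p r : exists r', act_iota b (p ++ r) = act_iota b p ++ r'.
Proof.
elim: p b => [|[] p IH] b /=; first by exists (act_iota b r).
  by have [r' ->] := IH (alpha * b); exists r'.
case: ifP => _; last by exists r.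
by have [r' ->] := act_a_cat p r; exists r'.
Qed.

Lemma act_cat g p r : act g (p ++ r) = act g p ++ restr g p r.
Proof.
have [r' act_pr] : exists r', act g (p ++ r) = act g p ++ r'.
  elim: g => [|s g [r1 IH]]; first by exists r.
  rewrite /act /= -/(act g _) IH.
  by case: s => [b|]; [exact: act_iota_cat | exact: act_a_cat].
by rewrite /restr act_pr drop_size_cat // size_act.
Qed.

Lemma restr_cat g p q u :
  restr g (p ++ q) u = drop (size q) (restr g p (q ++ u)).
Proof.
rewrite /restr -catA act_cat drop_drop size_cat addnC -drop_drop.
by rewrite drop_size_cat // size_act.
Qed.

End Words.

Section Germs.
Variables (F : finFieldType) (n : nat) (alpha : F).
Local Notation act := (act n alpha).
Local Notation restr := (restr n alpha).
Local Notation germ_eq := (germ_eq n alpha).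

Definition germ_agree (eta : seq bool) (g : gword F) (mu eta' : seq bool) (g' : gword F)
  (mu' : seq bool) (w : nat -> bool) (k : nat) : Prop :=
  [/\ (size mu <= k)%N, (size mu' <= k)%N,
    eta ++ act g (drop (size mu) (pre w k))
      = eta' ++ act g' (drop (size mu') (pre w k))
    & forall u, restr g (drop (size mu) (pre w k)) u
                = restr g' (drop (size mu') (pre w k)) u].

Lemma germ_agree_mono eta g mu eta' g' mu' w k k' : (k <= k')%N ->
  germ_agree eta g mu eta' g' mu' w k -> germ_agree eta g mu eta' g' mu' w k'.
Proof.
move=> /subnKC <-; rewrite /germ_agree pre_add.
move=> [mu_k mu'_k act_eq restr_eq].
rewrite !drop_cat_leq ?size_pre //.
split; [exact: leq_trans mu_k (leq_addr _ _) | exact: leq_trans mu'_k (leq_addr _ _)|..].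
  by rewrite !act_cat catA act_eq restr_eq -catA.
by move=> u; rewrite !restr_cat restr_eq.
Qed.

Lemma germ_refl x : germ_eq x x.
Proof. by case: x => [[[eta g] mu] w]; split=> //; exists (size mu). Qed.

Lemma germ_sym x y : germ_eq x y -> germ_eq y x.
Proof.
case: x => [[[eta g] mu] w]; case: y => [[[eta' g'] mu'] w'].
move=> [w_w' [k [mu_k mu'_k act_eq restr_eq]]]; split=> [i|]; first by rewrite w_w'.
by exists k; rewrite /germ_agree /pre -(eq_mkseq w_w'); split.
Qed.

Lemma germ_trans x y z : germ_eq x y -> germ_eq y z -> germ_eq x z.
Proof.
case: x => [[[eta g] mu] w]; case: y => [[[eta' g'] mu'] w'].
case: z => [[[eta'' g''] mu''] w''].
move=> [w_w' [k1 agree1]] [w'_w'' [k2 agree2]].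
split=> [i|]; first by rewrite w_w' w'_w''.
exists (maxn k1 k2).
have [mu_k mu'_k act1 restr1] := germ_agree_mono (leq_maxl k1 k2) agree1.
have [_ mu''_k] := germ_agree_mono (leq_maxr k1 k2) agree2.
rewrite /pre -(eq_mkseq w_w') => act2 restr2.
by split=> // [|u]; rewrite /pre ?act1 ?act2 // restr1 restr2.
Qed.

End Germs.

Section OpenBisections.
Variables (F : finFieldType) (n : nat) (alpha : F).
Local Notation Theta := (Theta n alpha).

Lemma gopen_Theta eta (g : gword F) mu U :
  cantor_open U -> (forall w, U w -> in_cyl mu w) ->
  gopen n alpha (fun x => valid x /\ Theta eta g mu U x).
Proof.
move=> U_open U_mu; split=> [x y _ y_valid x_y [_ [w [Uw w_mu x_w]]] | x _ [_ x_Theta]].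
  by split=> //; exists w; split=> //; apply: germ_trans (germ_sym x_y) x_w.
by exists eta, g, mu, U; split=> // y y_valid y_Theta.
Qed.

Lemma singular_const_eq0 (K : fieldType) (f : grep F -> K) A v :
  singular n alpha f -> gopen n alpha A ->
  (forall x, valid x -> A x -> f x = v) ->
  forall x, valid x -> A x -> v = 0.
Proof.
move=> f_sing A_open f_A x x_valid Ax; have [//|v_neq0] := eqVneq v 0; exfalso.
by apply: (f_sing A A_open _ x x_valid Ax) => y y_valid Ay; split; rewrite ?f_A.
Qed.

End OpenBisections.

Section IotaOnOnes.
Variables (F : finFieldType) (n : nat) (alpha : F).
Local Notation act_iota := (act_iota n alpha).
Local Notation germ_eq := (germ_eq n alpha).
Local Notation Theta := (Theta n alpha).

Definition ones_zero k := rcons (nseq k true) false.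

Definition act_a_if (t : bool) r := if t then act_a r else r.

(* iota_n(beta) restricted to the cylinder C(1^k 0) is a^Tr(alpha^k beta). *)
Definition restr_bit k beta := Tr n (alpha ^+ k * beta) == 1.

Lemma act_iota_ones_zero k beta r :
  act_iota beta (ones_zero k ++ r) = ones_zero k ++ act_a_if (restr_bit k beta) r.
Proof.
rewrite /ones_zero !cat_rcons /restr_bit.
elim: k beta => [|k IH] beta /=; first by rewrite expr0 mul1r.
by rewrite IH exprSr mulrA.
Qed.

Lemma act_a_if_inj t t' r : r != [::] -> act_a_if t r = act_a_if t' r -> t = t'.
Proof. by case: r => // x r _; case: t; case: t' => // -[]; case: x. Qed.

Lemma in_cyl_ones_zero k : in_cyl (ones_zero k) (fun i => (i < k)%N).
Proof.
move=> i; rewrite /ones_zero size_rcons size_nseq ltnS nth_rcons size_nseq.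
by rewrite nth_nseq leq_eqVlt => /orP[/eqP->|->]; rewrite ?ltnn ?eqxx.
Qed.

Lemma in_cyl_ones_zero_ones k m w :
  (m <= k)%N -> in_cyl (ones_zero k) w -> ones_cyl m w.
Proof.
move=> m_k w_k i i_m; have i_k := leq_trans i_m m_k.
rewrite w_k /ones_zero ?size_rcons ?size_nseq ?ltnS ?(ltnW i_k) //.
by rewrite nth_rcons size_nseq i_k nth_nseq i_k.
Qed.

Lemma germ_eq_iota k w beta beta' : in_cyl (ones_zero k) w ->
  germ_eq ([::], [:: Some beta], [::], w) ([::], [:: Some beta'], [::], w) <->
  restr_bit k beta = restr_bit k beta'.
Proof.
move=> /in_cylP; rewrite size_rcons size_nseq => pre_w.
split=> [[_ [j agree]] | bits_eq].
  have [_ _ + _] := germ_agree_mono (leq_addl k.+2 j) agree.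
  rewrite addSnnS pre_add pre_w /= !drop0 !act_iota_ones_zero.
  move/(congr1 (drop (size (ones_zero k)))); rewrite !drop_size_cat //.
  by apply: act_a_if_inj; rewrite -size_eq0 size_mkseq.
split=> //; exists k.+1; rewrite /germ_agree !drop0 pre_w; split=> //.
  by rewrite -(cats0 (ones_zero k)) /= !act_iota_ones_zero bits_eq.
by move=> u; rewrite /restr /= !act_iota_ones_zero bits_eq.
Qed.

End IotaOnOnes.

Section SingularFsum.
Variables (F : finFieldType) (n : nat) (alpha : F).
Local Notation Theta := (Theta n alpha).
Local Notation restr_bit := (restr_bit n alpha).

Lemma U_iota_Theta m k beta beta0 x : (m <= k)%N ->
  Theta [::] [:: Some beta0] [::] (in_cyl (ones_zero k)) x ->
  U_iota n alpha m beta x <-> restr_bit k beta = restr_bit k beta0.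
Proof.
move=> m_k [w [w_k _ x_w]]; split=> [[w' [_ _ x_w']] | bits_eq].
  have [_ agree] := germ_trans (germ_sym x_w) x_w'.
  by apply/esym/(germ_eq_iota n alpha _ _ w_k).
exists w; split; [exact: in_cyl_ones_zero_ones w_k | by [] |].
by apply: germ_trans x_w _; apply/(germ_eq_iota n alpha _ _ w_k).
Qed.

Lemma fsum_Theta (K : fieldType) (c : F -> K) m k beta0 x : (m <= k)%N ->
  Theta [::] [:: Some beta0] [::] (in_cyl (ones_zero k)) x ->
  fsum n alpha c m x = \sum_(beta | restr_bit k beta == restr_bit k beta0) c beta.
Proof.
move=> m_k x_Theta; rewrite /fsum [RHS]big_mkcond; apply: eq_bigr => beta _.
have [bits_eq|bits_neq] := eqVneq (restr_bit k beta) (restr_bit k beta0).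
  by rewrite asboolT ?mulr1 //; apply/(U_iota_Theta beta m_k x_Theta).
rewrite asboolF ?mulr0 // => /(U_iota_Theta beta m_k x_Theta) bits_eq.
by rewrite bits_eq eqxx in bits_neq.
Qed.

Lemma singular_fsum_restr_bit_sums (K : fieldType) (c : F -> K) m k beta0 :
  singular n alpha (fsum n alpha c m) -> (m <= k)%N ->
  \sum_(beta | restr_bit k beta == restr_bit k beta0) c beta = 0.
Proof.
move=> f_sing m_k.
pose A x := valid x /\ Theta [::] [:: Some beta0] [::] (in_cyl (ones_zero k)) x.
have A_open : gopen n alpha A.
  by apply: gopen_Theta; [exact: cantor_open_cyl | move=> w _ []].
pose w0 i := (i < k)%N.
apply: (singular_const_eq0 f_sing A_open _ (x := ([::], [:: Some beta0], [::], w0))).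
- by move=> x _ [_ x_Theta]; apply: fsum_Theta x_Theta.
- by [].
split=> //; exists w0; split=> //; [exact: in_cyl_ones_zero | exact: germ_refl].
Qed.

End SingularFsum.

Section Trace.
Variables (n : nat) (F : finFieldType).
Hypotheses (cardF : #|F| = (2 ^ n)%N) (charF : (2 \in [pchar F])%N).

Lemma exprDn_2pow (x y : F) i : (x + y) ^+ (2 ^ i) = x ^+ (2 ^ i) + y ^+ (2 ^ i).
Proof. by rewrite exprDn_pchar // pnatX pnatE //= charF. Qed.

Lemma Tr0 : Tr n (0 : F) = 0.
Proof. by rewrite /Tr big1 // => i _; rewrite expr0n expn_eq0. Qed.

Lemma TrD (x y : F) : Tr n (x + y) = Tr n x + Tr n y.
Proof. by rewrite /Tr -big_split; apply: eq_bigr => i _; rewrite exprDn_2pow. Qed.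

Lemma TrB (x y : F) : Tr n (x - y) = Tr n x - Tr n y.
Proof. by apply/eqP; rewrite eq_sym subr_eq -TrD subrK. Qed.

(* Squaring shifts the Frobenius orbit of x, and x ^+ 2 ^ n = x closes it up. *)
Lemma Tr_sqr (x : F) : Tr n x ^+ 2 = Tr n x.
Proof.
rewrite /Tr -(pFrobenius_autE charF) rmorph_sum /=.
under eq_bigr => i _ do rewrite pFrobenius_autE -exprM -expnSr.
case: n cardF => [|k] card_F; first by rewrite !big_ord0.
rewrite big_ord_recr big_ord_recl /= -card_F expf_card expn0 expr1 addrC.
by congr (_ + _); apply: eq_bigr => i _.
Qed.

Lemma Tr01 (x : F) : (Tr n x == 0) || (Tr n x == 1).
Proof.
have : Tr n x * (Tr n x - 1) == 0 by rewrite mulrBr mulr1 -expr2 Tr_sqr subrr.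
by rewrite mulf_eq0 subr_eq0.
Qed.

Lemma Tr_eq1_eq (x y : F) : ((Tr n x == 1) == (Tr n y == 1)) = (Tr n (x - y) == 0).
Proof.
rewrite TrB subr_eq0.
case/orP: (Tr01 x) => /eqP->; case/orP: (Tr01 y) => /eqP->;
  by rewrite ?eqxx // ?[0 == 1]eq_sym oner_eq0.
Qed.

(* Tr is a polynomial of degree 2 ^ n.-1 < #|F|, so it cannot vanish on F. *)
Lemma Tr_neq0 : (0 < n)%N -> exists y : F, Tr n y != 0.
Proof.
case: n cardF => [|k] card_F // _.
have [y Tr_y|Tr_eq0] := pickP (fun y : F => Tr k.+1 y != 0); first by exists y.
pose P : {poly F} := \sum_(i < k.+1) 'X^(2 ^ i).
have P_Tr y : P.[y] = Tr k.+1 y.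
  by rewrite /P horner_sum; apply: eq_bigr => i _; rewrite hornerXn.
have P_eq0 : P = 0.
  apply: (@roots_geq_poly_eq0 _ P (enum F)); last 1 first.
  - rewrite -cardE card_F; apply: leq_trans (size_sum _ _ _) _.
    by apply/bigmax_leqP => i _; rewrite size_polyXn ltn_exp2l.
  - by apply/allP => y _; rewrite /root P_Tr; move/negbFE: (Tr_eq0 y).
  - exact: enum_uniq.
have : P`_(2 ^ k) = 1.
  rewrite /P coef_sum (bigD1 ord_max) //= coefXn eqxx big1 ?addr0 // => i i_k.
  by rewrite coefXn eqn_exp2l // eq_sym; move: i_k; rewrite -val_eqE /= => /negPf->.
by rewrite P_eq0 coef0 => /eqP; rewrite eq_sym oner_eq0.
Qed.

End Trace.

Lemma expf_card_pred (F : finFieldType) (g : F) : g != 0 -> g ^+ #|F|.-1 = 1.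
Proof.
move=> g_neq0; apply: (mulIf g_neq0).
by rewrite mul1r -exprSr prednK ?expf_card // (cardD1 0).
Qed.

Lemma prim_root_exp_geq (F : fieldType) (N : nat) (alpha g : F) (m : nat) :
  N.-primitive_root alpha -> g ^+ N = 1 -> exists2 k, (m <= k)%N & alpha ^+ k = g.
Proof.
move=> prim g_N; have [i ->] := prim_rootP prim g_N.
exists (i + N * m)%N; last by rewrite exprD exprM (prim_expr_order prim) expr1n mulr1.
by rewrite (leq_trans _ (leq_addl i _)) // leq_pmull // (prim_order_gt0 prim).
Qed.

Lemma char0_mulrn_eq0 (K : fieldType) (x : K) (N : nat) :
  [pchar K] =i pred0 -> (0 < N)%N -> x *+ N = 0 -> x = 0.
Proof.
move=> /pcharf0P charK0 N_gt0 /eqP.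
by rewrite -mulr_natr mulf_eq0 charK0 eqn0Ngt N_gt0 orbF => /eqP.
Qed.

Section ClassSums.
Variables (K : fieldType) (F : finFieldType) (P : pred F) (c : F -> K).
Hypotheses (charK0 : [pchar K] =i pred0) (P0 : P 0).
Hypothesis class_sums0 :
  forall g b, g != 0 -> \sum_(x | P (g * (x - b))) c x = 0.

Lemma sum_eq0_of_class_sums : \sum_x c x = 0.
Proof.
have sum_classes : \sum_b \sum_(x | P (x - b)) c x = 0.
  apply: big1 => b _; rewrite -[RHS](class_sums0 b (oner_neq0 F)).
  by apply: eq_bigl => x; rewrite mul1r.
apply: (@char0_mulrn_eq0 _ _ #|P|) => //; first by apply/card_gt0P; exists 0.
rewrite -sumr_const -{}[RHS]sum_classes exchange_big [RHS](exchange_big_dep predT) //=.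
apply: eq_bigr => x _; rewrite [RHS](reindex_inj (subrI x)) /=.
by apply: eq_bigl => b; rewrite subKr.
Qed.

Lemma eq0_of_class_sums y : ~~ P y -> forall b, c b = 0.
Proof.
move=> Py b.
have class_sums g : \sum_(x | P (g * (x - b))) c x = 0.
  have [->|] := eqVneq g 0; last exact: class_sums0.
  by rewrite -[RHS]sum_eq0_of_class_sums; apply: eq_bigl => x; rewrite mul0r P0.
(* Summed over all g, the class sums of b count c b #|F| times and every
   other c x exactly #|P| times. *)
have : \sum_g \sum_(x | P (g * (x - b))) c x = 0 by apply: big1.
rewrite (exchange_big_dep predT) //= (bigD1 b) //= subrr.
have shift x : x != b -> \sum_(g | true && P (g * (x - b))) c x = \sum_(g | P g) c x.
  by rewrite -subr_eq0 => xb; rewrite [RHS](reindex_inj (mulIf xb)).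
rewrite (eq_bigr _ shift) exchange_big /=.
under eq_bigl do rewrite mulr0 P0.
rewrite (bigID P) /= addrAC -big_split /=.
rewrite big1 => [|g _]; last by have := sum_eq0_of_class_sums; rewrite (bigD1 b).
rewrite add0r sumr_const => /char0_mulrn_eq0; apply => //.
by apply/card_gt0P; exists y.
Qed.

End ClassSums.

Theorem mainTheorem6 (K : fieldType) (charK0 : [pchar K] =i pred0)
  (n : nat) (hn : (2 <= n)%N)
  (F : finFieldType) (cardF : #|F| = (2 ^ n)%N) (charF : (2 \in [pchar F])%N)
  (alpha : F) (prim : (2 ^ n).-1.-primitive_root alpha)
  (c : F -> K) (m : nat) :
  singular n alpha (fsum n alpha c m) <->
  (forall x, valid x -> fsum n alpha c m x = 0).
Proof.
split=> [f_sing | f_eq0 A _ A_supp x x_valid Ax]; last first.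
  by have [_] := A_supp x x_valid Ax; rewrite f_eq0 ?eqxx.
have class_sums g b : g != 0 -> \sum_(x | Tr n (g * (x - b)) == 0) c x = 0.
  rewrite -cardF in prim => /expf_card_pred g_unity.
  have [k m_k <-] := prim_root_exp_geq m prim g_unity.
  rewrite -[RHS](singular_fsum_restr_bit_sums b f_sing m_k).
  by apply: eq_bigl => x; rewrite /restr_bit Tr_eq1_eq // mulrBr.
have [y Tr_y] := Tr_neq0 cardF (ltnW hn).
have Tr0_eq0 : Tr n (0 : F) == 0 by rewrite Tr0.
have c_eq0 :=
  eq0_of_class_sums (P := fun x => Tr n x == 0) charK0 Tr0_eq0 class_sums Tr_y.
by move=> x _; rewrite /fsum big1 // => beta _; rewrite c_eq0 mul0r.
Qed.
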